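(* Let $\Phi,\Psi,S,T$ be finite sets and let $p(\varphi)$ on $\Phi$ and $p(\psi)$ on $\Psi$ be fixed probability distributions with full support. Let $\pi:S\times T\times\Phi\to\mathbb{R}$ be a payoff function that depends only on the signals and on the first player's state of nature. Suppose $p(s,t,\varphi,\psi)$ is a state-consistent entangled joint distribution on $S\times T\times\Phi\times\Psi$ that maximizes the expected payoff $\sum_{s,t,\varphi,\psi}\pi(s,t;\varphi)\,p(s,t,\varphi,\psi)$ among all state-consistent entangled joint distributions. Then there exists a state-consistent classically generated joint distribution $\widetilde p(s,t,\varphi,\psi)$ whose expected payoff $\sum_{s,t,\varphi,\psi}\pi(s,t;\varphi)\,\widetilde p(s,t,\varphi,\psi)$ equals this maximal value. That is, the maximal expected payoff achievable with state-consistent entangled signals coincides with the expected payoff of certain state-consistent classically generated signals.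
   Context: Coordination game: player A privately observes a state of nature $\varphi\in\Phi$, player B privately observes $\psi\in\Psi$; $\varphi$ and $\psi$ are independent with joint distribution $p(\varphi,\psi)=p(\varphi)p(\psi)$. Players receive signals $s\in S$ (A) and $t\in T$ (B) and play their signals as actions; the payoff is $\pi(s,t;\varphi)$ and the expected payoff of a joint distribution $q(s,t,\varphi,\psi)$ is $\sum\pi(s,t;\varphi)q(s,t,\varphi,\psi)$. A joint distribution of $(s,t,\varphi,\psi)$ is: state-consistent if its $(\varphi,\psi)$-marginal equals $p(\varphi)p(\psi)$; disjoint if $\Pr\{\psi\mid\varphi,s\}=\Pr\{\psi\mid\varphi\}$ and $\Pr\{\varphi\mid\psi,t\}=\Pr\{\varphi\mid\psi\}$ (whenever the conditioning events have positive probability); classically generated if there exists a random variable $x$ (jointly distributed with $(s,t,\varphi,\psi)$) independent of $(\varphi,\psi)$ such that $p(s,t\mid x,\varphi,\psi)=p(s\mid x,\varphi)\,p(t\mid x,\psi)$; entangled if it is disjoint and not classically generated. *)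

From HB Require Import structures.
From mathcomp Require Import all_boot all_order all_algebra.
From mathcomp Require Import reals.
Set Implicit Arguments. Unset Strict Implicit. Unset Printing Implicit Defensive.
Import Order.TTheory GRing.Theory Num.Theory.
Local Open Scope ring_scope.

Section Coord.
Variables (R : realType) (S T Phi Psi : finType).

Definition joint_dist (p : S -> T -> Phi -> Psi -> R) : Prop :=
  (forall s t f g, 0 <= p s t f g) /\
  \sum_(s : S) \sum_(t : T) \sum_(f : Phi) \sum_(g : Psi) p s t f g = 1.

Definition m_phipsi (p : S -> T -> Phi -> Psi -> R) f g :=
  \sum_(s : S) \sum_(t : T) p s t f g.
Definition m_phi (p : S -> T -> Phi -> Psi -> R) f :=
  \sum_(g : Psi) m_phipsi p f g.
Definition m_psi (p : S -> T -> Phi -> Psi -> R) g :=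
  \sum_(f : Phi) m_phipsi p f g.
Definition m_phis (p : S -> T -> Phi -> Psi -> R) f s :=
  \sum_(t : T) \sum_(g : Psi) p s t f g.
Definition m_phispsi (p : S -> T -> Phi -> Psi -> R) f s g :=
  \sum_(t : T) p s t f g.
Definition m_psit (p : S -> T -> Phi -> Psi -> R) g t :=
  \sum_(s : S) \sum_(f : Phi) p s t f g.
Definition m_psitphi (p : S -> T -> Phi -> Psi -> R) g t f :=
  \sum_(s : S) p s t f g.

Definition state_consistent (pA : Phi -> R) (pB : Psi -> R)
    (p : S -> T -> Phi -> Psi -> R) : Prop :=
  forall f g, m_phipsi p f g = pA f * pB g.

(* Pr{psi | phi, s} = Pr{psi | phi} and Pr{phi | psi, t} = Pr{phi | psi},
   whenever the conditioning event has positive probability. *)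
Definition disjoint (p : S -> T -> Phi -> Psi -> R) : Prop :=
  (forall f s g, 0 < m_phis p f s ->
     m_phispsi p f s g / m_phis p f s = m_phipsi p f g / m_phi p f) /\
  (forall g t f, 0 < m_psit p g t ->
     m_psitphi p g t f / m_psit p g t = m_phipsi p f g / m_psi p g).

(* Classically generated: there is a (finitely valued) random variable x,
   jointly distributed with (s,t,phi,psi) via q(x,s,t,phi,psi), whose
   marginal on (s,t,phi,psi) is p, x is independent of (phi,psi), and
   p(s,t | x,phi,psi) = p(s | x,phi) p(t | x,psi) (whenever x,phi,psi has
   positive probability). *)
Definition classically_generated (p : S -> T -> Phi -> Psi -> R) : Prop :=
  exists (X : finType) (q : X -> S -> T -> Phi -> Psi -> R),
    [/\ (forall x s t f g, 0 <= q x s t f g),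
        (forall s t f g, \sum_(x : X) q x s t f g = p s t f g),
        (forall x f g,
           \sum_(s : S) \sum_(t : T) q x s t f g =
           (\sum_(s : S) \sum_(t : T) \sum_(f' : Phi) \sum_(g' : Psi) q x s t f' g')
           * m_phipsi p f g) &
        (forall x s t f g,
           let qxfg := \sum_(s' : S) \sum_(t' : T) q x s' t' f g in
           let qxf := \sum_(s' : S) \sum_(t' : T) \sum_(g' : Psi) q x s' t' f g' in
           let qxg := \sum_(s' : S) \sum_(t' : T) \sum_(f' : Phi) q x s' t' f' g in
           let qxsf := \sum_(t' : T) \sum_(g' : Psi) q x s t' f g' in
           let qxtg := \sum_(s' : S) \sum_(f' : Phi) q x s' t f' g in
           0 < qxfg ->
           q x s t f g / qxfg = (qxsf / qxf) * (qxtg / qxg))].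

Definition entangled (p : S -> T -> Phi -> Psi -> R) : Prop :=
  disjoint p /\ ~ classically_generated p.

Definition expected_payoff (pi : S -> T -> Phi -> R)
    (p : S -> T -> Phi -> Psi -> R) : R :=
  \sum_(s : S) \sum_(t : T) \sum_(f : Phi) \sum_(g : Psi) pi s t f * p s t f g.

End Coord.

From Pilot Require Import Defs.
From HB Require Import structures.
From mathcomp Require Import all_boot all_order all_algebra.
From mathcomp Require Import reals.
Set Implicit Arguments. Unset Strict Implicit. Unset Printing Implicit Defensive.
Import Order.TTheory GRing.Theory Num.Theory.
Local Open Scope ring_scope.

(* Since the payoff ignores psi, it only depends on the (s,t,phi)-marginal of
   p; we may therefore discard the correlation of psi with everything else and
   redraw psi independently from p(psi).  The result is classically generated
   with B's own signal t as the hidden variable: disjointness of p says that t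
   carries no information about phi, so t is independent of (phi,psi), and s is
   independent of the freshly drawn psi given (t,phi). *)

Lemma sum_delta (R : pzSemiRingType) (I : finType) (k : I) (F : I -> R) :
  \sum_(i : I) (i == k)%:R * F i = F k.
Proof.
rewrite (bigD1 k) //= eqxx mul1r big1 ?addr0 // => i /negbTE ->.
exact: mul0r.
Qed.

Lemma sum_delta2 (R : pzSemiRingType) (I J : finType) (k : I) (F : I -> J -> R) :
  \sum_(i : I) \sum_(j : J) (i == k)%:R * F i j = \sum_(j : J) F k j.
Proof. by under eq_bigr do rewrite -mulr_sumr; exact: sum_delta. Qed.

Lemma ler_sum_slice (R : numDomainType) (I J : finType) (F : I -> J -> R)
    (j : J) :
  (forall i j', 0 <= F i j') ->
  \sum_(i : I) F i j <= \sum_(i : I) \sum_(j' : J) F i j'.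
Proof.
move=> F_ge0; apply: ler_sum => i _.
by rewrite (bigD1 j) //= lerDl; exact: sumr_ge0.
Qed.

Section Resampling.
Variables (R : realType) (S T Phi Psi : finType).
Implicit Types (p q : S -> T -> Phi -> Psi -> R) (pA : Phi -> R) (pB : Psi -> R).

Definition marg_psi p s t f := \sum_(g : Psi) p s t f g.

Definition resample_psi pB p s t f g := marg_psi p s t f * pB g.

Lemma sum_resample_psi pB p s t f :
  \sum_(g : Psi) pB g = 1 ->
  \sum_(g : Psi) resample_psi pB p s t f g = marg_psi p s t f.
Proof. by move=> pB1; rewrite /marg_psi /resample_psi -mulr_sumr pB1 mulr1. Qed.

Lemma expected_payoff_marg_psi (pi : S -> T -> Phi -> R) p :
  expected_payoff pi p =
  \sum_(s : S) \sum_(t : T) \sum_(f : Phi) pi s t f * marg_psi p s t f.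
Proof.
apply: eq_bigr => s _; apply: eq_bigr => t _; apply: eq_bigr => f _.
by rewrite mulr_sumr.
Qed.

Lemma expected_payoff_resample (pi : S -> T -> Phi -> R) pB p :
  \sum_(g : Psi) pB g = 1 ->
  expected_payoff pi (resample_psi pB p) = expected_payoff pi p.
Proof.
move=> pB1; rewrite !expected_payoff_marg_psi.
apply: eq_bigr => s _; apply: eq_bigr => t _; apply: eq_bigr => f _.
by congr (_ * _); exact: sum_resample_psi.
Qed.

Lemma joint_dist_resample pB p :
  (forall g, 0 <= pB g) -> \sum_(g : Psi) pB g = 1 ->
  joint_dist p -> joint_dist (resample_psi pB p).
Proof.
move=> pB_ge0 pB1 [p_ge0 p1]; split.
  by move=> s t f g; apply: mulr_ge0 => //; exact: sumr_ge0.
rewrite -p1; apply: eq_bigr => s _; apply: eq_bigr => t _; apply: eq_bigr => f _.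
exact: sum_resample_psi.
Qed.

Lemma m_phi_state_consistent pA pB p f :
  \sum_(g : Psi) pB g = 1 -> state_consistent pA pB p -> m_phi p f = pA f.
Proof.
move=> pB1 sc; rewrite /m_phi; under eq_bigr do rewrite sc.
by rewrite -mulr_sumr pB1 mulr1.
Qed.

Lemma m_psi_state_consistent pA pB p g :
  \sum_(f : Phi) pA f = 1 -> state_consistent pA pB p -> m_psi p g = pB g.
Proof.
move=> pA1 sc; rewrite /m_psi; under eq_bigr do rewrite sc.
by rewrite -mulr_suml pA1 mul1r.
Qed.

Lemma state_consistent_resample pA pB p :
  \sum_(g : Psi) pB g = 1 -> state_consistent pA pB p ->
  state_consistent pA pB (resample_psi pB p).
Proof.
move=> pB1 sc f g; rewrite /m_phipsi /resample_psi.
under eq_bigr do rewrite -mulr_suml.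
rewrite -mulr_suml -(m_phi_state_consistent f pB1 sc) /m_phi /m_phipsi /marg_psi.
congr (_ * _); rewrite [RHS]exchange_big.
by apply: eq_bigr => s _; rewrite exchange_big.
Qed.

Lemma disjoint_m_psitphi pA pB p :
  (forall s t f g, 0 <= p s t f g) -> \sum_(f : Phi) pA f = 1 ->
  (forall g, pB g != 0) -> state_consistent pA pB p -> Defs.disjoint p ->
  forall g t f, m_psitphi p g t f = pA f * m_psit p g t.
Proof.
move=> p_ge0 pA1 pB_neq0 sc [_ disj_t] g t f.
have psit_sum : m_psit p g t = \sum_(f' : Phi) m_psitphi p g t f'.
  exact: exchange_big.
have psitphi_ge0 f' : 0 <= m_psitphi p g t f' by exact: sumr_ge0.
have [psit0 | psit_neq0] := eqVneq (m_psit p g t) 0.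
  rewrite psit0 mulr0; move: psit0; rewrite psit_sum => psit0.
  exact: (psumr_eq0P _ psit0).
have psit_gt0 : 0 < m_psit p g t.
  by rewrite lt0r psit_neq0 psit_sum; exact: sumr_ge0.
have := disj_t g t f psit_gt0.
rewrite sc (m_psi_state_consistent g pA1 sc) mulfK // => cond_eq.
by rewrite -cond_eq divfK // pB_neq0.
Qed.

Lemma disjoint_phi_indep_t pA pB p :
  (forall s t f g, 0 <= p s t f g) -> \sum_(f : Phi) pA f = 1 ->
  (forall g, pB g != 0) -> state_consistent pA pB p -> Defs.disjoint p ->
  forall t f, \sum_(s : S) marg_psi p s t f =
  pA f * \sum_(s : S) \sum_(f' : Phi) marg_psi p s t f'.
Proof.
move=> p_ge0 pA1 pB_neq0 sc disj t f.
rewrite /marg_psi exchange_big /=.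
under eq_bigr => g _ do
  rewrite -/(m_psitphi p g t f) (disjoint_m_psitphi p_ge0 pA1 pB_neq0 sc disj).
rewrite -mulr_sumr; congr (_ * _).
by rewrite /m_psit exchange_big; apply: eq_bigr => s _; rewrite exchange_big.
Qed.

Lemma classically_generated_via_t q :
  (forall s t f g, 0 <= q s t f g) ->
  (forall t f g, \sum_(s : S) q s t f g =
     (\sum_(s : S) \sum_(f' : Phi) \sum_(g' : Psi) q s t f' g')
     * m_phipsi q f g) ->
  (forall s t f g, q s t f g * (\sum_(s' : S) \sum_(g' : Psi) q s' t f g') =
     (\sum_(g' : Psi) q s t f g') * \sum_(s' : S) q s' t f g) ->
  classically_generated q.
Proof.
move=> q_ge0 t_indep s_cond_indep.
exists T, (fun x s t f g => (t == x)%:R * q s t f g); split.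
- by move=> x s t f g; rewrite mulr_ge0 ?ler0n.
- move=> s t f g; under eq_bigr do rewrite eq_sym.
  exact: (sum_delta t (fun=> q s t f g)).
- move=> x f g; under eq_bigr do rewrite sum_delta.
  rewrite t_indep; congr (_ * _); apply: eq_bigr => s _.
  under [RHS]eq_bigr do under eq_bigr do rewrite -mulr_sumr.
  by rewrite sum_delta2.
move=> x s t f g qxfg qxf qxg qxsf qxtg.
have -> : qxfg = \sum_(s' : S) q s' x f g.
  by apply: eq_bigr => s' _; exact: sum_delta.
have -> : qxf = \sum_(s' : S) \sum_(g' : Psi) q s' x f g'.
  by apply: eq_bigr => s' _; exact: sum_delta2.
have -> : qxg = \sum_(s' : S) \sum_(f' : Phi) q s' x f' g.
  by apply: eq_bigr => s' _; exact: sum_delta2.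
have -> : qxsf = \sum_(g' : Psi) q s x f g' by exact: sum_delta2.
have -> : qxtg = (t == x)%:R * \sum_(s' : S) \sum_(f' : Phi) q s' t f' g.
  by rewrite /qxtg mulr_sumr; apply: eq_bigr => s' _; rewrite mulr_sumr.
have [-> | _] := eqVneq t x; last by rewrite !mul0r mulr0.
rewrite !mul1r => qxfg_gt0.
have qxf_gt0 :=
  lt_le_trans qxfg_gt0 (ler_sum_slice g (fun s' g' => q_ge0 s' x f g')).
have qxg_gt0 :=
  lt_le_trans qxfg_gt0 (ler_sum_slice f (fun s' f' => q_ge0 s' x f' g)).
rewrite divff ?gt_eqF // mulr1.
apply/eqP; rewrite eqr_div ?(gt_eqF qxfg_gt0) ?(gt_eqF qxf_gt0) //.
exact/eqP/s_cond_indep.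
Qed.

Lemma classically_generated_resample pA pB p :
  (forall g, 0 <= pB g) -> \sum_(g : Psi) pB g = 1 ->
  (forall s t f g, 0 <= p s t f g) -> state_consistent pA pB p ->
  (forall t f, \sum_(s : S) marg_psi p s t f =
     pA f * \sum_(s : S) \sum_(f' : Phi) marg_psi p s t f') ->
  classically_generated (resample_psi pB p).
Proof.
move=> pB_ge0 pB1 p_ge0 sc phi_indep.
apply: classically_generated_via_t.
- by move=> s t f g; apply: mulr_ge0 => //; exact: sumr_ge0.
- move=> t f g; rewrite (state_consistent_resample pB1 sc).
  rewrite /resample_psi -mulr_suml.
  under [in RHS]eq_bigr do under eq_bigr do rewrite sum_resample_psi //.
  by rewrite phi_indep [RHS]mulrCA mulrA.
- move=> s t f g; rewrite sum_resample_psi //.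
  under eq_bigr do rewrite sum_resample_psi //.
  by rewrite /resample_psi -mulr_suml mulrA mulrAC.
Qed.

End Resampling.

Theorem theorem2 (R : realType) (S T Phi Psi : finType)
    (pA : Phi -> R) (pB : Psi -> R)
    (pA_pos : forall f, 0 < pA f) (pA_sum : \sum_(f : Phi) pA f = 1)
    (pB_pos : forall g, 0 < pB g) (pB_sum : \sum_(g : Psi) pB g = 1)
    (pi : S -> T -> Phi -> R)
    (p : S -> T -> Phi -> Psi -> R) :
  joint_dist p -> state_consistent pA pB p -> entangled p ->
  (forall q : S -> T -> Phi -> Psi -> R,
      joint_dist q -> state_consistent pA pB q -> entangled q ->
      expected_payoff pi q <= expected_payoff pi p) ->
  exists pt : S -> T -> Phi -> Psi -> R,
    [/\ joint_dist pt, state_consistent pA pB pt, classically_generated pt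
      & expected_payoff pi pt = expected_payoff pi p].
Proof.
move=> p_dist sc [disj _] _.
have pB_ge0 g : 0 <= pB g by exact: ltW.
have pB_neq0 g : pB g != 0 by rewrite gt_eqF.
have p_ge0 := p_dist.1.
exists (resample_psi pB p); split.
- exact: joint_dist_resample.
- exact: state_consistent_resample.
- apply: classically_generated_resample => //.
  exact: disjoint_phi_indep_t p_ge0 pA_sum pB_neq0 sc disj.
- exact: expected_payoff_resample.
Qed.
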